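(* Let $A$ be a finite-dimensional real algebra with identity $e$ in which every subalgebra generated by a single element is associative, and let $(p^{[n]}(t))_{n\in\mathbb N}$, $p^{[n]}(t)=\sum_{k=0}^\infty a_k^{[n]}t^k$, be any sequence of real power series with $\sum_{k}|a_k^{[n]}|<\infty$ for each $n$ and $\lim_{n\to\infty}\sup\{|a_k^{[n]}|:k\ge1\}=0$. If $x\in A$ and $\lim_{n\to\infty}x^n=x_0$, then $\lim_{n\to\infty}p^{[n]}(x)$ exists if and only if $\lim_{n\to\infty}\big[a_0^{[n]}e+(p^{[n]}(1)-a_0^{[n]})x_0\big]$ exists, and in that case $$\lim_{n\to\infty}p^{[n]}(x)=\lim_{n\to\infty}\big[a_0^{[n]}e+(p^{[n]}(1)-a_0^{[n]})x_0\big].$$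
   Context: $A$ carries the Euclidean topology; $p^{[n]}(x)=a_0^{[n]}e+\sum_{k\ge1}a_k^{[n]}x^k$ and $p^{[n]}(1)=\sum_{k\ge0}a_k^{[n]}$. The sequence $(p^{[n]})$ is arbitrary (not necessarily iterates). *)

From HB Require Import structures.
From mathcomp Require Import all_boot all_order all_algebra.
From mathcomp Require Import all_classical all_reals all_analysis.
Set Implicit Arguments. Unset Strict Implicit. Unset Printing Implicit Defensive.
Import Order.TTheory GRing.Theory Num.Theory.
Import numFieldNormedType.Exports.
Local Open Scope classical_set_scope.
Local Open Scope ring_scope.

(* A finite-dimensional real algebra of dimension d is modelled on the
   underlying space 'rV[R]_d (Euclidean topology) with a bilinear,
   not necessarily associative, multiplication [mul]. *)

Definition bilinear_mul (R : realType) (d : nat)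
  (mul : 'rV[R]_d -> 'rV[R]_d -> 'rV[R]_d) : Prop :=
  (forall (a : R) x y z, mul (a *: x + y) z = a *: mul x z + mul y z) /\
  (forall (a : R) x y z, mul z (a *: x + y) = a *: mul z x + mul z y).

Definition is_identity (R : realType) (d : nat)
  (mul : 'rV[R]_d -> 'rV[R]_d -> 'rV[R]_d) (e : 'rV[R]_d) : Prop :=
  forall x, mul e x = x /\ mul x e = x.

Definition is_subalgebra (R : realType) (d : nat)
  (mul : 'rV[R]_d -> 'rV[R]_d -> 'rV[R]_d) (S : set 'rV[R]_d) : Prop :=
  S 0 /\ (forall (a : R) x y, S x -> S y -> S (a *: x + y)) /\
  (forall x y, S x -> S y -> S (mul x y)).

Definition gen_subalg (R : realType) (d : nat)
  (mul : 'rV[R]_d -> 'rV[R]_d -> 'rV[R]_d) (x : 'rV[R]_d) : set 'rV[R]_d :=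
  fun y => forall S, is_subalgebra mul S -> S x -> S y.

Definition power_associative (R : realType) (d : nat)
  (mul : 'rV[R]_d -> 'rV[R]_d -> 'rV[R]_d) : Prop :=
  forall x y z w, gen_subalg mul x y -> gen_subalg mul x z -> gen_subalg mul x w ->
    mul (mul y z) w = mul y (mul z w).

Fixpoint apow (R : realType) (d : nat)
  (mul : 'rV[R]_d -> 'rV[R]_d -> 'rV[R]_d) (e x : 'rV[R]_d) (k : nat) : 'rV[R]_d :=
  match k with
  | 0%N => e
  | k'.+1 => mul x (apow mul e x k')
  end.

Definition pseries_eval (R : realType) (d : nat)
  (mul : 'rV[R]_d -> 'rV[R]_d -> 'rV[R]_d) (e x : 'rV[R]_d) (a : nat -> R) : 'rV[R]_d :=
  a 0%N *: e + limn (series (fun k => a k.+1 *: apow mul e x k.+1)).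

Definition pseries_at1 (R : realType) (a : nat -> R) : R :=
  limn (series a).

From HB Require Import structures.
From mathcomp Require Import all_boot all_order all_algebra.
From mathcomp Require Import all_classical all_reals all_analysis.
From mathcomp Require Import lra.
Set Implicit Arguments.
Unset Strict Implicit.
Import Order.TTheory GRing.Theory Num.Theory.
Import numFieldNormedType.Exports.
Local Open Scope classical_set_scope.
Local Open Scope ring_scope.

(* Put z_k = x^k - x_0.  Power associativity gives x^(k+m) = x^k x^m, and a
   bilinear product on a finite-dimensional space is bounded, hence continuous;
   letting one exponent tend to infinity yields x^k x_0 = x_0 x^m = x_0 x_0 = x_0,
   so that z_(k+m) = z_k z_m.  With |u v| <= C |u| |v| and N such that
   q := C |z_N| < 1, this gives |z_(N+k)| <= q |z_k|, so the partial sums of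
   sum_k |z_k| are bounded by some B.  Finally
   p^[n](x) - [a_0 e + (p^[n](1) - a_0) x_0] = sum_(k>=1) a_k^[n] z_k has norm at
   most B sup_(k>=1) |a_k^[n]|, which tends to 0. *)

(* The library makes matrices a [completeType] and a [normedModType], but does
   not register them as a [completeNormedModType]. *)
HB.instance Definition _ (R : realType) (m n : nat) := Complete.on 'M[R]_(m, n).

Lemma mx_entry_norm_le (R : realType) m n (A : 'M[R]_(m, n)) i j : `|A i j| <= `|A|.
Proof. by rewrite [leRHS]mx_normrE; apply: (le_bigmax _ _ (i, j)). Qed.

Lemma cvg_dominated (R : realFieldType) (V W : normedModType R)
    (f : nat -> V) (g : nat -> W) (l : V) (l' : W) (C : R) :
  0 <= C -> (forall n, `|l' - g n| <= C * `|l - f n|) ->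
  f @ \oo --> l -> g @ \oo --> l'.
Proof.
move=> C_ge0 gf /cvgrPdist_lt fl; apply/cvgrPdist_lt => eps eps_gt0.
have C1_gt0 : 0 < C + 1 by rewrite ltr_wpDl.
apply: filterS (fl _ (divr_gt0 eps_gt0 C1_gt0)) => n fn.
apply: le_lt_trans (gf n) _; apply: le_lt_trans (_ : _ <= (C + 1) * `|l - f n|) _.
  by rewrite ler_wpM2r // lerDl.
by rewrite -ltr_pdivlMl // mulrC.
Qed.

Lemma cvg_sub0_equiv (R : realFieldType) (V : normedModType R) (f g : nat -> V) :
  (fun n => f n - g n) @ \oo --> 0 ->
  (cvgn f <-> cvgn g) /\ (cvgn g -> limn f = limn g).
Proof.
move=> fg0.
have fgE : f = (fun n => f n - g n) + g by apply/funext => n /=; rewrite subrK.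
have fg_cvg : cvgn (fun n => f n - g n) by apply/cvg_ex; exists 0.
split; first split => [f_cvg|g_cvg].
- have -> : g = f - (fun n => f n - g n) by apply/funext => n /=; rewrite subKr.
  exact: is_cvgB.
- by rewrite fgE; apply: is_cvgD.
- by move=> g_cvg; rewrite fgE limD // (cvg_lim _ fg0) // add0r.
Qed.

Lemma abs_coefS_le_sup (R : realType) (b : nat -> R) :
  cvgn (series (fun k => `|b k|)) ->
  forall k, `|b k.+1| <= sup (range (fun k => `|b k.+1|)).
Proof.
move=> /cvg_series_bounded/bounded_fun_has_ubound[M bM] k.
apply: ub_le_sup; last by exists k.
by exists M => _ [i _ <-]; apply: bM; exists i.+1.
Qed.

Lemma sum_bounded_of_shift_contraction (R : realFieldType) (s : nat -> R) N q :
  q < 1 -> (forall k, 0 <= s k) -> (forall k, s (N + k) <= q * s k) ->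
  forall n, \sum_(k < n) s k <= (1 - q)^-1 * \sum_(k < N) s k.
Proof.
move=> q_lt1 s_ge0 s_contr n; rewrite ler_pdivlMl ?subr_gt0 //.
have le_head : \sum_(k < n) s k <= \sum_(k < N + n) s k.
  by rewrite addnC big_split_ord /= lerDl; apply: sumr_ge0.
have le_tail : \sum_(k < N + n) s k <= \sum_(k < N) s k + q * \sum_(k < n) s k.
  by rewrite big_split_ord mulr_sumr lerD2l; apply: ler_sum => i _; apply: s_contr.
lra.
Qed.

Lemma normed_series_bounded (R : realType) (V : completeNormedModType R)
    (w : nat -> V) (B : R) :
  (forall n, \sum_(k < n) `|w k| <= B) ->
  cvgn (series w) /\ `|limn (series w)| <= B.
Proof.
move=> wB; have normed_le n : series (fun k => `|w k|) n <= B.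
  by rewrite seriesEord; apply: wB.
have normed_cvg_w : cvgn (series (fun k => `|w k|)).
  apply: nondecreasing_is_cvgn; first by apply: nondecreasing_series => i _ _.
  by exists B => _ [n _ <-].
split; first exact: normed_cvg.
apply: le_trans (lim_series_norm normed_cvg_w) _.
by apply: limr_le => //; apply: nearW.
Qed.

Lemma lim_seriesZ_recenter (R : realType) (V : normedModType R)
    (b : nat -> R) (X : nat -> V) (x0 : V) :
  cvgn (series b) -> cvgn (series (fun k => b k.+1 *: (X k.+1 - x0))) ->
  limn (series (fun k => b k.+1 *: X k.+1)) =
    (limn (series b) - b 0%N) *: x0 + limn (series (fun k => b k.+1 *: (X k.+1 - x0))).
Proof.
set w := fun k => _ *: (_ - x0); move=> b_cvg w_cvg; apply: cvg_lim => //.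
have -> : series (fun k => b k.+1 *: X k.+1) =
    (fun m => (series b m.+1 - b 0%N) *: x0 + series w m).
  apply/funext => m; rewrite /series /= big_nat_recl //= [b 0%N + _]addrC addrK.
  rewrite scaler_suml -big_split; apply: eq_bigr => k _.
  by rewrite /w /= scalerBr addrC subrK.
apply: cvgD => //; apply: cvgZ; last exact: cvg_cst.
apply: cvgB; last exact: cvg_cst.
by rewrite (cvg_shiftS (series b)).
Qed.

Section bounded_bilinear.
Variables (R : realType) (m n : nat) (V : normedModType R).
Variable f : {bilinear 'rV[R]_m -> 'rV[R]_n -> V}.

Lemma bilinear_rV_bounded :
  exists2 C, 0 <= C & forall u v, `|f u v| <= C * `|u| * `|v|.
Proof.
exists (\sum_(i < m) \sum_(j < n) `|f 'e_i 'e_j|).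
  by apply: sumr_ge0 => i _; apply: sumr_ge0.
move=> u v; rewrite [u in f u]row_sum_delta [v in f _ v]row_sum_delta linear_sumlz.
apply: le_trans (ler_norm_sum _ _ _) _; rewrite !mulr_suml; apply: ler_sum => i _.
rewrite linearZl_LR linear_sumr normrZ mulrAC [leRHS]mulrC.
apply: ler_pM => //; first exact: mx_entry_norm_le.
apply: le_trans (ler_norm_sum _ _ _) _; rewrite mulr_suml; apply: ler_sum => j _.
by rewrite linearZr_LR normrZ mulrC ler_wpM2l // mx_entry_norm_le.
Qed.

Lemma cvg_bilinearl (u_ : nat -> 'rV[R]_m) u v :
  u_ @ \oo --> u -> (fun k => f (u_ k) v) @ \oo --> f u v.
Proof.
have [C C_ge0 fC] := bilinear_rV_bounded.
apply: (cvg_dominated (C := C * `|v|)) => [|k]; first exact: mulr_ge0.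
by rewrite -linearBl (le_trans (fC _ _)) // mulrAC.
Qed.

Lemma cvg_bilinearr u (v_ : nat -> 'rV[R]_n) v :
  v_ @ \oo --> v -> (fun k => f u (v_ k)) @ \oo --> f u v.
Proof.
have [C C_ge0 fC] := bilinear_rV_bounded.
apply: (cvg_dominated (C := C * `|u|)) => [|k]; first exact: mulr_ge0.
by rewrite -linearBr (le_trans (fC _ _)).
Qed.

End bounded_bilinear.

Arguments bilinear_rV_bounded {R m n V} f.
Arguments cvg_bilinearl {R m n V} f {u_ u} v.
Arguments cvg_bilinearr {R m n V} f u {v_ v}.

Section powers.
Variables (R : realType) (d : nat) (mul : 'rV[R]_d -> 'rV[R]_d -> 'rV[R]_d).
Variables (e x : 'rV[R]_d).
Hypotheses (e_id : is_identity mul e) (mul_pa : power_associative mul).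
Local Notation X := (apow mul e x).

Lemma apowS_gen_subalg k : gen_subalg mul x (X k.+1).
Proof.
move=> S [_ [_ S_mul]] Sx; elim: k => [|k IH] /=; first by rewrite (e_id x).2.
exact: S_mul.
Qed.

Lemma apowD k m : X (k + m) = mul (X k) (X m).
Proof.
elim: k => [|k IH]; first by rewrite /= (e_id _).1.
rewrite addSn /= {}IH; case: k => [|k]; first by rewrite /= (e_id _).1 (e_id x).2.
case: m => [|m]; first by rewrite /= !(e_id _).2.
by rewrite (mul_pa (fun S _ Sx => Sx) (apowS_gen_subalg k) (apowS_gen_subalg m)).
Qed.

Lemma pseries_eval_sub_le x0 (b : nat -> R) B :
  cvgn (series (fun k => `|b k|)) -> (forall n, \sum_(k < n) `|X k - x0| <= B) ->
  `|pseries_eval mul e x b - (b 0%N *: e + (pseries_at1 b - b 0%N) *: x0)|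
    <= sup (range (fun k => `|b k.+1|)) * B.
Proof.
move=> b_abs sumB; set s := sup _.
have b_le_s := abs_coefS_le_sup b_abs.
have s_ge0 : 0 <= s := le_trans (normr_ge0 _) (b_le_s 0%N).
pose w k := b k.+1 *: (X k.+1 - x0).
have sum_w_le n : \sum_(k < n) `|w k| <= s * B.
  apply: le_trans (_ : \sum_(k < n) s * `|X k.+1 - x0| <= _).
    by apply: ler_sum => k _; rewrite /w normrZ ler_wpM2r.
  rewrite -mulr_sumr ler_wpM2l //; apply: le_trans (sumB n.+1).
  by rewrite big_ord_recl lerDr.
have [w_cvg lim_w_le] := normed_series_bounded sum_w_le.
rewrite /pseries_eval /pseries_at1 (lim_seriesZ_recenter (x0 := x0)) //.
  by rewrite addrA [_ + limn _]addrC addrK.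
exact: normed_cvg.
Qed.

End powers.

Section limit_of_powers.
Variables (R : realType) (d : nat) (mul : {bilinear 'rV[R]_d -> 'rV[R]_d -> 'rV[R]_d}).
Variables (e x x0 : 'rV[R]_d).
Hypotheses (e_id : is_identity mul e) (mul_pa : power_associative mul).
Hypothesis X_cvg : apow mul e x @ \oo --> x0.
Local Notation X := (apow mul e x).

Lemma mul_apow_lim k : mul (X k) x0 = x0.
Proof.
have shifted : (fun m => mul (X k) (X m)) @ \oo --> x0.
  rewrite (_ : (fun m => _) = fun m => X (m + k)) ?cvg_shiftn //.
  by apply/funext => m; rewrite addnC apowD.
exact: cvg_unique _ (cvg_bilinearr mul (X k) X_cvg) shifted.
Qed.

Lemma mul_lim_apow m : mul x0 (X m) = x0.
Proof.
have shifted : (fun k => mul (X k) (X m)) @ \oo --> x0.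
  rewrite (_ : (fun k => _) = fun k => X (k + m)) ?cvg_shiftn //.
  by apply/funext => k; rewrite apowD.
exact: cvg_unique _ (cvg_bilinearl mul (X m) X_cvg) shifted.
Qed.

Lemma mul_lim_lim : mul x0 x0 = x0.
Proof.
have := cvg_bilinearl mul x0 X_cvg.
rewrite (_ : (fun k => _) = fun=> x0); last by apply/funext => k; apply: mul_apow_lim.
by move=> lim_cvg; apply: cvg_unique _ lim_cvg (cvg_cst _).
Qed.

Lemma apowD_sub_lim k m : X (k + m) - x0 = mul (X k - x0) (X m - x0).
Proof.
by rewrite linearBl !linearBr mul_apow_lim mul_lim_apow mul_lim_lim apowD // subrr subr0.
Qed.

Lemma sum_norm_apow_sub_lim_bounded :
  exists B, forall n, \sum_(k < n) `|X k - x0| <= B.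
Proof.
have [C C_ge0 mulC] := bilinear_rV_bounded mul.
have C1_gt0 : 0 < C + 1 by rewrite ltr_wpDl.
have [N zN_small] : exists N, C * `|X N - x0| < 1.
  move/cvgrPdist_lt: X_cvg => /(_ (C + 1)^-1); rewrite invr_gt0 => /(_ C1_gt0) [N _ zN].
  exists N; apply: le_lt_trans (_ : _ <= (C + 1) * `|X N - x0|) _.
    by rewrite ler_wpM2r // lerDl.
  by rewrite -ltr_pdivlMl // mulr1 distrC; apply: zN => /=.
exists ((1 - C * `|X N - x0|)^-1 * \sum_(k < N) `|X k - x0|).
apply: (sum_bounded_of_shift_contraction (s := fun k => `|X k - x0|)) => // k.
by rewrite apowD_sub_lim mulC.
Qed.

End limit_of_powers.

Theorem lemma2 (R : realType) (d : nat)
  (mul : 'rV[R]_d -> 'rV[R]_d -> 'rV[R]_d) (e : 'rV[R]_d)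
  (a : nat -> nat -> R) (x x0 : 'rV[R]_d) :
  bilinear_mul mul -> is_identity mul e -> power_associative mul ->
  (forall n, cvgn (series (fun k => `|a n k|))) ->
  (fun n => sup (range (fun k => `|a n k.+1|))) @ \oo --> (0 : R) ->
  (fun n => apow mul e x n) @ \oo --> x0 ->
  let P := fun n => pseries_eval mul e x (a n) in
  let Q := fun n => a n 0%N *: e + (pseries_at1 (a n) - a n 0%N) *: x0 in
  (cvgn P <-> cvgn Q) /\ (cvgn Q -> limn P = limn Q).
Proof.
move=> mul_bilinear e_id mul_pa a_abs sup_cvg0 X_cvg P Q.
pose mulb : {bilinear 'rV[R]_d -> 'rV[R]_d -> 'rV[R]_d} :=
  HB.pack mul (bilinear_isBilinear.Build _ _ _ _ _ _ mul
    (fun z a u v => mul_bilinear.1 a u v z, fun z a u v => mul_bilinear.2 a u v z)).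
have [B sumB] := sum_norm_apow_sub_lim_bounded (mul := mulb) e_id mul_pa X_cvg.
have B_ge0 : 0 <= B by have := sumB 0%N; rewrite big_ord0.
apply: cvg_sub0_equiv.
apply: (cvg_dominated B_ge0 _ sup_cvg0) => n.
rewrite !sub0r !normrN mulrC.
apply: le_trans (pseries_eval_sub_le (mul := mulb) (a_abs n) sumB) _.
by rewrite ler_wpM2r // ler_norm.
Qed.
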